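(* For each $\alpha\in(0,\pi/2)$ and $\beta\in[0,\alpha]$, the competitive ratio of the $\beta$-Hedge algorithm with parameter $\beta$ equals $$\max_{r\in[\max\{0,-\cos(2\alpha)\},\,1]} f_1(\alpha,\beta,r).$$
   Context: Online drone coverage on a line. A drone has a fixed half angle-of-view $\alpha\in(0,\pi/2)$. A drone at a point $T=(t_x,t_y)$ with $t_y\ge 0$ covers the segment $[t_x-t_y\tan\alpha,\ t_x+t_y\tan\alpha]$ of the $x$-axis. For a point $X=(x,0)$ its feasibility cone is $\mathrm{FC}(X)=\{(u,v): v\ge 0,\ |u-x|\le v\tan\alpha\}$, and the feasibility cone of a finite set of points is the intersection of their cones. An input is a sequence $X_0=(0,0),X_1,\dots,X_n$ ($n\ge1$) of points $X_i=(x_i,0)$ revealed one at a time. A solution is a sequence of positions $P_0=(0,0),P_1,\dots,P_n$ with $P_i\in\mathrm{FC}(X_0,\dots,X_i)$; its cost is $\sum_i|P_iP_{i+1}|$. $\mathrm{OPT}(\mathbf X;\alpha)$ is the minimum cost of a solution (input known in advance). A request $X_{i+1}$ is redundant if $x_{i+1}\in[\min_{j\le i}x_j,\max_{j\le i}x_j]$. An input is good if it has no redundant requests, $\min_j x_j=-1$ and $\max_j x_j\in[0,1]$. The competitive ratio of an algorithm is the supremum over good inputs of its cost divided by $\mathrm{OPT}$. The $\beta$-Hedge algorithm with parameter $\beta\in[0,\alpha]$: if $P_{i-1}\in\mathrm{FC}(X_0,\dots,X_i)$ then $P_i=P_{i-1}$; otherwise the drone moves from $P_{i-1}$ along the ray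 with direction $(\operatorname{sgn}(x_i)\sin\beta,\cos\beta)$ (angle $\beta$ from the upward vertical, tilted toward the new request), and $P_i$ is the first point of this ray in $\mathrm{FC}(X_0,\dots,X_i)$. $$f_1(\alpha,\beta,r)=\frac{2\sin\alpha}{\cos\beta(\tan\alpha+\tan\beta)}\cdot\frac{1+\frac{2\tan\beta}{\tan\alpha+\tan\beta}\,r}{\sqrt{1+r^2+2\cos(2\alpha)\,r}}.$$ *)

From Stdlib Require Import Reals Lra.
Open Scope R_scope.

Definition pt := (R * R)%type.

Definition dist (p q : pt) : R :=
  sqrt ((fst p - fst q) ^ 2 + (snd p - snd q) ^ 2).

(* An input is given by x : nat -> R together with its length n;
   the requested points are X_j = (x j, 0) for j = 0..n (only these values matter). *)

Definition in_FC (a : R) (x : nat -> R) (i : nat) (p : pt) : Prop :=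
  0 <= snd p /\ forall j, (j <= i)%nat -> Rabs (fst p - x j) <= snd p * tan a.

Fixpoint cost (P : nat -> pt) (n : nat) : R :=
  match n with
  | O => 0
  | S m => cost P m + dist (P m) (P (S m))
  end.

Definition solution (a : R) (x : nat -> R) (n : nat) (P : nat -> pt) : Prop :=
  P 0%nat = (0, 0) /\ forall i, (i <= n)%nat -> in_FC a x i (P i).

Definition is_OPT (a : R) (x : nat -> R) (n : nat) (o : R) : Prop :=
  (forall P, solution a x n P -> o <= cost P n) /\
  (forall m, (forall P, solution a x n P -> m <= cost P n) -> m <= o).

Definition good (x : nat -> R) (n : nat) : Prop :=
  (1 <= n)%nat /\ x 0%nat = 0 /\
  (* no redundant request: x_{i+1} not in [min_{j<=i} x_j, max_{j<=i} x_j] *)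
  (forall i, (i < n)%nat ->
     ~ ((exists j, (j <= i)%nat /\ x j <= x (S i)) /\
        (exists j, (j <= i)%nat /\ x (S i) <= x j))) /\
  ((exists j, (j <= n)%nat /\ x j = -1) /\ (forall j, (j <= n)%nat -> -1 <= x j)) /\
  ((exists j, (j <= n)%nat /\ 0 <= x j) /\ (forall j, (j <= n)%nat -> x j <= 1)).

Definition sgn (r : R) : R :=
  if Rlt_dec 0 r then 1 else if Rlt_dec r 0 then -1 else 0.

Definition hedge_step (a b : R) (x : nat -> R) (i : nat) (p q : pt) : Prop :=
  let d : pt := (sgn (x (S i)) * sin b, cos b) in
  let ray (t : R) : pt := (fst p + t * fst d, snd p + t * snd d) in
  (in_FC a x (S i) p -> q = p) /\
  (~ in_FC a x (S i) p ->
     exists t, 0 <= t /\ q = ray t /\ in_FC a x (S i) q /\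
       forall s, 0 <= s < t -> ~ in_FC a x (S i) (ray s)).

Definition hedge_run (a b : R) (x : nat -> R) (n : nat) (P : nat -> pt) : Prop :=
  P 0%nat = (0, 0) /\ forall i, (i < n)%nat -> hedge_step a b x i (P i) (P (S i)).

(* The set of ratios ALG/OPT over good inputs; the competitive ratio is its supremum. *)
Definition hedge_ratios (a b : R) (q : R) : Prop :=
  exists x n P o, good x n /\ hedge_run a b x n P /\ is_OPT a x n o /\
    q = cost P n / o.

Definition f1 (a b r : R) : R :=
  2 * sin a / (cos b * (tan a + tan b)) *
  ((1 + 2 * tan b / (tan a + tan b) * r) / sqrt (1 + r ^ 2 + 2 * cos (2 * a) * r)).

From Stdlib Require Import Reals Lra Lia Classical.
Open Scope R_scope.

(* Write tilt = 2 tan b / (tan a + tan b) and gap_rate = cos b (tan a + tan b).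
   Along a non-redundant input whose requests lie in [-l, h], Hedge maintains:
   its height v equals cost * cos b, the segment seen from its position under
   half-angle b never reaches further than tilt * l to the left or tilt * h to
   the right, and (tan a + tan b) v <= max (h + tilt * l) (l + tilt * h).  Each
   active move ends on the boundary of the cone of the new request, which is
   what makes these bounds propagate.  On a good input with largest request
   rho this gives cost <= (1 + tilt * rho) / gap_rate, while every solution
   travels at least the distance from the origin to FC(-1, rho): apex_dist rho
   if rho >= - cos 2a, and cos a otherwise.  Since
   f1 r = (1 + tilt * r) / (gap_rate * apex_dist r), every ratio is at most
   some f1 r.  Conversely the input 0, r, -1 makes Hedge pay exactly
   (1 + tilt * r) / gap_rate while OPT = apex_dist r, and continuity of f1
   covers the endpoint r = 0, which no good input of this shape realises. *)

Lemma Rabs_le_iff (z w : R) : Rabs z <= w <-> - w <= z <= w.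
Proof. unfold Rabs; destruct (Rcase_abs z); split; intros; lra. Qed.

Lemma sin_cos_sq (t : R) : sin t ^ 2 + cos t ^ 2 = 1.
Proof. pose proof (sin2_cos2 t) as H. unfold Rsqr in H. lra. Qed.

Lemma Rmax0_div_le_iff (g k s : R) : 0 < k -> 0 <= s ->
  (Rmax 0 (g / k) <= s <-> g <= s * k).
Proof.
  intros Hk Hs.
  assert (Hdiv : g / k <= s <-> g <= s * k).
  { replace g with (g / k * k) at 2 by (field; lra).
    split; intros H; [apply Rmult_le_compat_r|apply Rmult_le_reg_r with k]; lra. }
  rewrite <- Hdiv. split; intros H.
  - exact (Rle_trans _ _ _ (Rmax_r 0 _) H).
  - apply Rmax_lub; assumption.
Qed.

Lemma ratio_le (c o N Y : R) : 0 <= c -> 0 < N -> N <= o -> c <= Y * N -> c / o <= Y.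
Proof.
  intros Hc HN Ho H.
  assert (HY : 0 <= Y) by nra.
  apply Rmult_le_reg_r with o; [lra|].
  replace (c / o * o) with c by (field; lra). nra.
Qed.

Lemma le_of_approx_le (f : R -> R) (lo hi c m : R) :
  (forall r, lo <= r <= hi -> continuity_pt f r) -> lo <= c <= hi ->
  (forall d, 0 < d -> exists r, lo <= r <= hi /\ Rabs (r - c) < d /\ f r <= m) ->
  f c <= m.
Proof.
  intros Hf Hc Happrox. apply Rnot_lt_le. intros Hlt.
  assert (Heps : 0 < f c - m) by lra.
  destruct (Heine_cor2 Hf (mkposreal _ Heps)) as [d Hd]; simpl in Hd.
  destruct (Happrox d (cond_pos d)) as [r [Hr [Hrc Hfr]]].
  specialize (Hd r c Hr Hc Hrc). apply Rabs_def2 in Hd. lra.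
Qed.

Lemma first_hit_iff {A : Type} (F : A -> Prop) (r : R -> A) (p q : A) (s0 : R) :
  r 0 = p -> 0 <= s0 -> (forall s, 0 <= s -> (F (r s) <-> s0 <= s)) ->
  ((F p -> q = p) /\
   (~ F p -> exists t, 0 <= t /\ q = r t /\ F q /\ forall s, 0 <= s < t -> ~ F (r s)))
  <-> q = r s0.
Proof.
  intros <- Hs0 HF. split.
  - intros [Hin Hout]. destruct (Req_dec s0 0) as [->|Hpos].
    + apply Hin, HF; lra.
    + assert (Hp : ~ F (r 0)) by (rewrite HF; lra).
      destruct (Hout Hp) as [t [Ht [-> [Hq Hmin]]]].
      apply HF in Hq; [|exact Ht].
      destruct (Req_dec s0 t) as [->|Hne]; [reflexivity|].
      exfalso. apply (Hmin s0); [lra|]. apply HF; lra.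
  - intros ->. split.
    + intros H. apply HF in H; [|lra]. replace s0 with 0 by lra. reflexivity.
    + intros _. exists s0. repeat split; [lra|apply HF; lra|].
      intros s Hs H. apply HF in H; lra.
Qed.

Lemma dist_ge_inner (p q : pt) (w1 w2 : R) : w1 ^ 2 + w2 ^ 2 <= 1 ->
  w1 * (fst q - fst p) + w2 * (snd q - snd p) <= dist p q.
Proof.
  intros Hw. unfold dist.
  set (d1 := fst q - fst p). set (d2 := snd q - snd p).
  replace ((fst p - fst q) ^ 2 + (snd p - snd q) ^ 2) with (d1 ^ 2 + d2 ^ 2)
    by (unfold d1, d2; ring).
  destruct (Rle_dec (w1 * d1 + w2 * d2) 0) as [H|H].
  - apply Rle_trans with 0; [exact H|apply sqrt_pos].
  - rewrite <- (sqrt_pow2 (w1 * d1 + w2 * d2)) by lra. apply sqrt_le_1_alt.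
    (* Cauchy-Schwarz, via Lagrange's identity *)
    assert (0 <= (w1 * d2 - w2 * d1) ^ 2) by apply pow2_ge_0.
    assert (0 <= d1 ^ 2) by apply pow2_ge_0. assert (0 <= d2 ^ 2) by apply pow2_ge_0.
    nra.
Qed.

Lemma cost_ge_inner (P : nat -> pt) (n : nat) (w1 w2 : R) : w1 ^ 2 + w2 ^ 2 <= 1 ->
  w1 * (fst (P n) - fst (P 0%nat)) + w2 * (snd (P n) - snd (P 0%nat)) <= cost P n.
Proof.
  intros Hw. induction n as [|n IH]; simpl.
  - lra.
  - pose proof (dist_ge_inner (P n) (P (S n)) w1 w2 Hw). lra.
Qed.

Lemma dist_self (p : pt) : dist p p = 0.
Proof.
  unfold dist. replace ((fst p - fst p) ^ 2 + (snd p - snd p) ^ 2) with 0 by ring.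
  apply sqrt_0.
Qed.

Definition ray (b sigma : R) (p : pt) (s : R) : pt :=
  (fst p + s * (sigma * sin b), snd p + s * cos b).

Lemma dist_ray (b sigma : R) (p : pt) (s : R) : sigma = 1 \/ sigma = -1 -> 0 <= s ->
  dist p (ray b sigma p s) = s.
Proof.
  intros Hsigma Hs. unfold dist, ray; cbn [fst snd].
  replace ((fst p - (fst p + s * (sigma * sin b))) ^ 2 + (snd p - (snd p + s * cos b)) ^ 2)
    with (s ^ 2 * (sin b ^ 2 + cos b ^ 2)) by (destruct Hsigma; subst; ring).
  rewrite sin_cos_sq, Rmult_1_r. apply sqrt_pow2, Hs.
Qed.

Lemma sgn_eq (sigma r : R) : sigma = 1 \/ sigma = -1 -> 0 < sigma * r -> sgn r = sigma.
Proof.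
  unfold sgn. intros [-> | ->] H;
    destruct (Rlt_dec 0 r); try destruct (Rlt_dec r 0); lra.
Qed.

Lemma cost_nonneg (P : nat -> pt) (n : nat) : 0 <= cost P n.
Proof.
  induction n as [|n IH]; simpl; [lra|].
  pose proof (sqrt_pos ((fst (P n) - fst (P (S n))) ^ 2 + (snd (P n) - snd (P (S n))) ^ 2)).
  unfold dist. lra.
Qed.

Lemma exists_argmax (x : nat -> R) (n : nat) :
  exists j, (j <= n)%nat /\ forall j', (j' <= n)%nat -> x j' <= x j.
Proof.
  induction n as [|n [j [Hj Hmax]]].
  - exists 0%nat. split; [lia|]. intros j' Hj'. replace j' with 0%nat by lia. lra.
  - destruct (Rle_dec (x (S n)) (x j)) as [Hle|Hlt].
    + exists j. split; [lia|]. intros j' Hj'.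
      destruct (proj1 (Nat.le_succ_r j' n) Hj') as [Hj''| ->]; auto.
    + exists (S n). split; [lia|]. intros j' Hj'.
      destruct (proj1 (Nat.le_succ_r j' n) Hj') as [Hj''| ->]; [|lra].
      specialize (Hmax j' Hj''). lra.
Qed.

Definition jump (q : pt) (j : nat) : pt := match j with O => (0, 0) | S _ => q end.

Lemma cost_jump (q : pt) (n : nat) : (1 <= n)%nat -> cost (jump q) n = dist (0, 0) q.
Proof.
  induction n as [|[|n] IH]; intros Hn; [lia|simpl; ring|].
  simpl cost in *. rewrite IH by lia. simpl jump. rewrite dist_self. ring.
Qed.

Definition advancing (x : nat -> R) (i : nat) (sigma : R) : Prop :=
  forall j, (j <= i)%nat -> sigma * x j < sigma * x (S i).

Definition nonredundant (x : nat -> R) (n : nat) : Prop :=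
  forall i, (i < n)%nat -> exists sigma, (sigma = 1 \/ sigma = -1) /\ advancing x i sigma.

Lemma good_nonredundant (x : nat -> R) (n : nat) : good x n -> nonredundant x n.
Proof.
  intros [_ [_ [Hnr _]]] i Hi. specialize (Hnr i Hi).
  destruct (classic (exists j, (j <= i)%nat /\ x (S i) <= x j)) as [H|H].
  - exists (-1). split; [now right|]. intros j Hj.
    assert (x (S i) < x j) by (apply Rnot_le_lt; intros Hc; apply Hnr; split; eauto).
    lra.
  - exists 1. split; [now left|]. intros j Hj.
    assert (x j < x (S i)) by (apply Rnot_le_lt; intros Hc; apply H; eauto).
    lra.
Qed.

Definition probe (r : R) (j : nat) : R := match j with 0%nat => 0 | 1%nat => r | _ => -1 end.

Lemma good_probe (r : R) : 0 < r <= 1 -> good (probe r) 2.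
Proof.
  intros Hr. split; [lia|]. split; [reflexivity|]. split; [|split; split].
  - intros [|[|i]] Hi; [| |lia]; intros [[j [Hj H1]] [j' [Hj' H2]]].
    + replace j' with 0%nat in H2 by lia. simpl in H2. lra.
    + destruct j as [|[|j]]; [| |lia]; simpl in H1; lra.
  - exists 2%nat. split; [lia|reflexivity].
  - intros [|[|j]] _; simpl; lra.
  - exists 0%nat. split; [lia|]. simpl. lra.
  - intros [|[|j]] _; simpl; lra.
Qed.

Lemma in_FC_origin (a : R) (x : nat -> R) : x 0%nat = 0 -> in_FC a x 0 (0, 0).
Proof.
  intros Hx0. split; cbn [fst snd]; [lra|]. intros j Hj.
  replace j with 0%nat by lia. rewrite Hx0, Rminus_0_r, Rabs_R0. lra.
Qed.

Definition gap_rate (a b : R) : R := cos b * (tan a + tan b).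
Definition tilt (a b : R) : R := 2 * tan b / (tan a + tan b).

Definition gap (a sigma : R) (x : nat -> R) (i : nat) (p : pt) : R :=
  sigma * (x (S i) - fst p) - snd p * tan a.

Definition hedge_len (a b sigma : R) (x : nat -> R) (i : nat) (p : pt) : R :=
  Rmax 0 (gap a sigma x i p / gap_rate a b).

Fixpoint hedge_path (a b : R) (x : nat -> R) (i : nat) : pt :=
  match i with
  | O => (0, 0)
  | S j =>
      let sigma := sgn (x (S j)) in
      ray b sigma (hedge_path a b x j) (hedge_len a b sigma x j (hedge_path a b x j))
  end.

(* [v tan b - u] and [v tan b + u] are how far the segment seen from (u, v)
   under half-angle b reaches to the left and to the right of the origin. *)
Definition hedge_inv (a b : R) (x : nat -> R) (l h : R) (P : nat -> pt) (i : nat) : Prop :=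
  in_FC a x i (P i) /\ cost P i * cos b = snd (P i) /\
  0 <= snd (P i) * tan b - fst (P i) <= tilt a b * l /\
  0 <= snd (P i) * tan b + fst (P i) <= tilt a b * h /\
  (tan a + tan b) * snd (P i) <= Rmax (h + tilt a b * l) (l + tilt a b * h).

Definition apex (a r : R) : pt := ((r - 1) / 2, (1 + r) / (2 * tan a)).

Definition apex_dist (a r : R) : R :=
  sqrt (1 + r ^ 2 + 2 * cos (2 * a) * r) / (2 * sin a).

Section Hedge.

Variables a b : R.
Hypothesis ha : 0 < a < PI / 2.
Hypothesis hb : 0 <= b <= a.

Lemma sin_a_pos : 0 < sin a.
Proof. apply sin_gt_0; lra. Qed.

Lemma cos_a_pos : 0 < cos a.
Proof. apply cos_gt_0; lra. Qed.

Lemma cos_b_pos : 0 < cos b.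
Proof. apply cos_gt_0; lra. Qed.

Lemma tan_a_pos : 0 < tan a.
Proof. apply tan_gt_0; lra. Qed.

Lemma tan_b_nonneg : 0 <= tan b.
Proof.
  destruct (Req_dec b 0) as [->|Hb]; [rewrite tan_0; lra|].
  left; apply tan_gt_0; lra.
Qed.

Lemma tan_b_le_tan_a : tan b <= tan a.
Proof.
  destruct (Req_dec b a) as [->|Hb]; [lra|].
  left; apply tan_increasing; lra.
Qed.

Lemma sin_b_eq : sin b = tan b * cos b.
Proof. pose proof cos_b_pos. unfold tan. field. lra. Qed.

Lemma gap_rate_pos : 0 < gap_rate a b.
Proof.
  pose proof cos_b_pos; pose proof tan_a_pos; pose proof tan_b_nonneg.
  unfold gap_rate. apply Rmult_lt_0_compat; lra.
Qed.

Lemma tilt_mul : tilt a b * (tan a + tan b) = 2 * tan b.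
Proof. pose proof tan_a_pos; pose proof tan_b_nonneg. unfold tilt. field. lra. Qed.

Lemma tilt_bounds : 0 <= tilt a b <= 1.
Proof.
  pose proof tan_a_pos; pose proof tan_b_nonneg; pose proof tan_b_le_tan_a; pose proof tilt_mul.
  split; apply Rmult_le_reg_r with (tan a + tan b); lra.
Qed.

(* A move of length s along the ray shrinks the gap by s * gap_rate a b:
   s * sin b horizontally and s * cos b * tan a by the widening of the cone. *)
Lemma in_FC_ray (sigma : R) (x : nat -> R) (i : nat) (p : pt) (s : R) :
  sigma = 1 \/ sigma = -1 -> in_FC a x i p -> advancing x i sigma -> 0 <= s ->
  (in_FC a x (S i) (ray b sigma p s) <-> gap a sigma x i p <= s * gap_rate a b).
Proof.
  intros Hsigma [Hv Hold] Hadv Hs.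
  pose proof cos_b_pos; pose proof tan_b_nonneg; pose proof tan_b_le_tan_a.
  assert (Hscb : 0 <= s * cos b) by nra.
  assert (Hmove : 0 <= s * sin b <= s * cos b * tan a)
    by (rewrite sin_b_eq; split; nra).
  assert (Hrate : s * gap_rate a b = s * sin b + s * cos b * tan a)
    by (unfold gap_rate; rewrite sin_b_eq; ring).
  unfold in_FC, ray, gap; cbn [fst snd]. rewrite Hrate. split.
  - intros [_ Hnew]. specialize (Hnew (S i) (le_n _)).
    apply Rabs_le_iff in Hnew. destruct Hsigma; subst sigma; lra.
  - intros Hgap. split; [nra|]. intros j Hj. apply Rabs_le_iff.
    destruct (proj1 (Nat.le_succ_r j i) Hj) as [Hj'| ->].
    + specialize (Hold j Hj'). apply Rabs_le_iff in Hold.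
      destruct Hsigma; subst sigma; lra.
    + specialize (Hold 0%nat (Nat.le_0_l _)). apply Rabs_le_iff in Hold.
      specialize (Hadv 0%nat (Nat.le_0_l _)).
      destruct Hsigma; subst sigma; lra.
Qed.

Lemma hedge_step_iff (sigma : R) (x : nat -> R) (i : nat) (p q : pt) :
  sigma = 1 \/ sigma = -1 -> in_FC a x i p -> advancing x i sigma -> 0 < sigma * x (S i) ->
  (hedge_step a b x i p q <-> q = ray b sigma p (hedge_len a b sigma x i p)).
Proof.
  intros Hsigma Hp Hadv Hdir.
  unfold hedge_step; cbv zeta; cbn [fst snd]. rewrite (sgn_eq sigma _ Hsigma Hdir).
  apply (first_hit_iff (in_FC a x (S i)) (ray b sigma p)).
  - unfold ray. destruct p; cbn [fst snd]. f_equal; ring.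
  - apply Rmax_l.
  - intros s Hs. unfold hedge_len.
    rewrite in_FC_ray, Rmax0_div_le_iff; auto using gap_rate_pos. reflexivity.
Qed.

Lemma hedge_step_in_FC (x : nat -> R) (i : nat) (p q : pt) :
  hedge_step a b x i p q -> in_FC a x (S i) q.
Proof.
  unfold hedge_step; cbv zeta. intros [Hin Hout].
  destruct (classic (in_FC a x (S i) p)) as [H|H].
  - rewrite (Hin H). exact H.
  - destruct (Hout H) as [t [_ [_ [Hq _]]]]. exact Hq.
Qed.

Lemma hedge_inv_step (x : nat -> R) (l h : R) (P : nat -> pt) (i : nat) (sigma : R) :
  sigma = 1 \/ sigma = -1 -> advancing x i sigma -> 0 < sigma * x (S i) ->
  - l <= x (S i) <= h -> hedge_inv a b x l h P i ->
  hedge_step a b x i (P i) (P (S i)) -> hedge_inv a b x l h P (S i).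
Proof.
  intros Hsigma Hadv Hdir Hx [Hin [Hcost [HD [HE Hv]]]] Hstep.
  pose proof cos_b_pos; pose proof tan_a_pos; pose proof tan_b_nonneg.
  pose proof tilt_mul as Hk; pose proof tilt_bounds as Hk01.
  assert (Hnext := hedge_step_in_FC _ _ _ _ Hstep).
  apply (hedge_step_iff sigma) in Hstep; auto.
  set (s := hedge_len a b sigma x i (P i)) in Hstep.
  assert (Hs : 0 <= s) by apply Rmax_l.
  assert (Hactive : s = 0 \/ s * gap_rate a b = gap a sigma x i (P i)).
  { pose proof gap_rate_pos. unfold s, hedge_len, Rmax.
    destruct (Rle_dec 0 _); [right; field; lra|now left]. }
  split; [exact Hnext|]. simpl cost.
  rewrite Hstep, dist_ray by assumption.
  unfold gap, gap_rate, ray in *; cbn [fst snd] in *. rewrite sin_b_eq.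
  set (u := fst (P i)) in *. set (v := snd (P i)) in *. set (k := tilt a b) in *.
  assert (Hmove : 0 <= s * cos b * tan b) by (apply Rmult_le_pos; [nra|lra]).
  destruct Hsigma as [-> | ->], Hactive as [-> | Hact].
  - repeat split; nra.
  - assert (ET : (tan a + tan b) * (v + s * cos b) = x (S i) + (v * tan b - u)) by lra.
    assert (EE : (v + s * cos b) * tan b + (u + s * (1 * (tan b * cos b)))
                 = k * (x (S i) + (v * tan b - u)) - (v * tan b - u)).
    { rewrite <- ET. transitivity (2 * tan b * (v + s * cos b) - (v * tan b - u)); [ring|].
      rewrite <- Hk. ring. }
    repeat split; try nra.
    rewrite ET. apply Rle_trans with (h + k * l); [lra|apply Rmax_l].
  - repeat split; nra.
  - assert (ET : (tan a + tan b) * (v + s * cos b) = - x (S i) + (v * tan b + u)) by lra.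
    assert (ED : (v + s * cos b) * tan b - (u + s * (-1 * (tan b * cos b)))
                 = k * (- x (S i) + (v * tan b + u)) - (v * tan b + u)).
    { rewrite <- ET. transitivity (2 * tan b * (v + s * cos b) - (v * tan b + u)); [ring|].
      rewrite <- Hk. ring. }
    repeat split; try nra.
    rewrite ET. apply Rle_trans with (l + k * h); [lra|apply Rmax_r].
Qed.

Lemma hedge_inv_run (x : nat -> R) (n : nat) (l h : R) (P : nat -> pt) :
  x 0%nat = 0 -> nonredundant x n -> (forall j, (j <= n)%nat -> - l <= x j <= h) ->
  hedge_run a b x n P -> forall i, (i <= n)%nat -> hedge_inv a b x l h P i.
Proof.
  intros Hx0 Hnr Hbd [HP0 Hsteps] i. induction i as [|i IH]; intros Hi.
  - pose proof tilt_bounds. destruct (Hbd 0%nat Hi) as [Hl Hh]. rewrite Hx0 in Hl, Hh.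
    unfold hedge_inv. rewrite HP0. split; [apply in_FC_origin, Hx0|].
    cbn [fst snd cost]. repeat split; try nra.
    apply Rle_trans with (h + tilt a b * l); [nra|apply Rmax_l].
  - destruct (Hnr i ltac:(lia)) as [sigma [Hsigma Hadv]].
    assert (Hdir := Hadv 0%nat (Nat.le_0_l _)). rewrite Hx0, Rmult_0_r in Hdir.
    apply (hedge_inv_step x l h P i sigma Hsigma Hadv Hdir (Hbd (S i) Hi)).
    + apply IH; lia.
    + apply Hsteps; lia.
Qed.

Lemma hedge_cost_le (x : nat -> R) (n : nat) (l h : R) (P : nat -> pt) :
  x 0%nat = 0 -> nonredundant x n -> (forall j, (j <= n)%nat -> - l <= x j <= h) ->
  hedge_run a b x n P ->
  cost P n * gap_rate a b <= Rmax (h + tilt a b * l) (l + tilt a b * h).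
Proof.
  intros Hx0 Hnr Hbd Hrun.
  destruct (hedge_inv_run x n l h P Hx0 Hnr Hbd Hrun n (le_n _)) as [_ [Hcost [_ [_ Hv]]]].
  unfold gap_rate. rewrite <- Rmult_assoc, Hcost. lra.
Qed.

Lemma apex_quad_pos (r : R) : 0 < 1 + r ^ 2 + 2 * cos (2 * a) * r.
Proof.
  pose proof sin_a_pos; pose proof cos_a_pos; pose proof (sin_cos_sq a).
  rewrite cos_2a.
  (* its discriminant in r is 4 cos^2 (2a) - 4 < 0 *)
  assert (0 <= (r + (cos a * cos a - sin a * sin a)) ^ 2) by apply pow2_ge_0.
  assert (0 < sin a * cos a) by nra.
  nra.
Qed.

Lemma apex_dist_pos (r : R) : 0 < apex_dist a r.
Proof.
  pose proof sin_a_pos. unfold apex_dist.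
  apply Rdiv_lt_0_compat; [apply sqrt_lt_R0, apex_quad_pos|lra].
Qed.

Lemma apex_dist_sq (r : R) : apex_dist a r ^ 2 = fst (apex a r) ^ 2 + snd (apex a r) ^ 2.
Proof.
  pose proof sin_a_pos; pose proof cos_a_pos; pose proof (sin_cos_sq a).
  unfold apex_dist, apex, tan; cbn [fst snd].
  unfold Rdiv. rewrite Rpow_mult_distr, pow2_sqrt by apply Rlt_le, apex_quad_pos.
  rewrite cos_2a. field_simplify; [|lra|lra].
  replace (cos a ^ 2) with (1 - sin a ^ 2) by lra. field. lra.
Qed.

Lemma dist_origin_apex (r : R) : dist (0, 0) (apex a r) = apex_dist a r.
Proof.
  unfold dist; cbn [fst snd].
  replace ((0 - fst (apex a r)) ^ 2 + (0 - snd (apex a r)) ^ 2)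
    with (fst (apex a r) ^ 2 + snd (apex a r) ^ 2) by ring.
  rewrite <- apex_dist_sq. apply sqrt_pow2, Rlt_le, apex_dist_pos.
Qed.

Lemma apex_in_FC (x : nat -> R) (i : nat) (r : R) :
  (forall j, (j <= i)%nat -> -1 <= x j <= r) -> -1 <= r -> in_FC a x i (apex a r).
Proof.
  intros Hx Hr. pose proof tan_a_pos.
  assert (E : snd (apex a r) * tan a = (1 + r) / 2) by (unfold apex; simpl; field; lra).
  split.
  - unfold apex; simpl. apply Rmult_le_pos; [lra|left; apply Rinv_0_lt_compat; lra].
  - intros j Hj. rewrite E. apply Rabs_le_iff. specialize (Hx j Hj). unfold apex; simpl. lra.
Qed.

(* The apex is the point of FC(-1, r) nearest to the origin: its position vector
   is the combination, with weights mu1 = (1 + r cos 2a) / (4 sin^2 a) and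
   mu2 = (r + cos 2a) / (4 sin^2 a), of the inward normals of the two boundary
   lines, and mu2 >= 0 is exactly the condition r >= - cos 2a. *)
Lemma apex_support (r u v : R) : - cos (2 * a) <= r <= 1 ->
  u + 1 <= v * tan a -> r - u <= v * tan a ->
  apex_dist a r ^ 2 <= fst (apex a r) * u + snd (apex a r) * v.
Proof.
  intros Hr Hleft Hright.
  pose proof sin_a_pos; pose proof cos_a_pos; pose proof (sin_cos_sq a).
  set (mu1 := (1 + r * cos (2 * a)) / (4 * sin a ^ 2)).
  set (mu2 := (r + cos (2 * a)) / (4 * sin a ^ 2)).
  assert (Hc2 : -1 <= cos (2 * a) <= 1) by (rewrite cos_2a; nra).
  assert (Hmu1 : 0 <= mu1) by (apply Rmult_le_pos; [nra|left; apply Rinv_0_lt_compat; nra]).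
  assert (Hmu2 : 0 <= mu2) by (apply Rmult_le_pos; [lra|left; apply Rinv_0_lt_compat; nra]).
  assert (Hid : fst (apex a r) * u + snd (apex a r) * v - apex_dist a r ^ 2
                = mu1 * (v * tan a - u - 1) + mu2 * (v * tan a - r + u)).
  { rewrite apex_dist_sq. unfold mu1, mu2, apex, tan; cbn [fst snd].
    rewrite cos_2a. field_simplify_eq; [|lra].
    replace (cos a ^ 3) with (cos a * cos a ^ 2) by ring.
    replace (cos a ^ 2) with (1 - sin a ^ 2) by lra. ring. }
  assert (0 <= mu1 * (v * tan a - u - 1)) by (apply Rmult_le_pos; lra).
  assert (0 <= mu2 * (v * tan a - r + u)) by (apply Rmult_le_pos; lra).
  lra.
Qed.

Lemma solution_cost_ge_apex_dist (x : nat -> R) (n : nat) (r : R) (P : nat -> pt) :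
  solution a x n P -> (exists j, (j <= n)%nat /\ x j = -1) ->
  (exists j, (j <= n)%nat /\ x j = r) -> - cos (2 * a) <= r <= 1 ->
  apex_dist a r <= cost P n.
Proof.
  intros [HP0 HP] [j [Hj Hxj]] [j' [Hj' Hxj']] Hr.
  pose proof (apex_dist_pos r) as HN.
  set (N := apex_dist a r) in *.
  set (A1 := fst (apex a r)). set (A2 := snd (apex a r)).
  assert (Hw : (A1 / N) ^ 2 + (A2 / N) ^ 2 <= 1).
  { right. replace ((A1 / N) ^ 2 + (A2 / N) ^ 2) with ((A1 ^ 2 + A2 ^ 2) / N ^ 2) by (field; lra).
    unfold A1, A2. rewrite <- apex_dist_sq. fold N. field. lra. }
  pose proof (cost_ge_inner P n _ _ Hw) as Hcost. rewrite HP0 in Hcost; cbn [fst snd] in Hcost.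
  destruct (HP n (le_n _)) as [_ HF].
  pose proof (HF j Hj) as Hleft. pose proof (HF j' Hj') as Hright.
  rewrite Hxj in Hleft. rewrite Hxj' in Hright.
  apply Rabs_le_iff in Hleft. apply Rabs_le_iff in Hright.
  assert (Hsupp : N ^ 2 <= A1 * fst (P n) + A2 * snd (P n)) by (apply apex_support; lra).
  apply Rle_trans with (2 := Hcost).
  apply Rmult_le_reg_r with N; [exact HN|].
  replace ((A1 / N * (fst (P n) - 0) + A2 / N * (snd (P n) - 0)) * N)
    with (A1 * fst (P n) + A2 * snd (P n)) by (field; lra).
  lra.
Qed.

Lemma solution_cost_ge_cos (x : nat -> R) (n : nat) (P : nat -> pt) :
  solution a x n P -> (exists j, (j <= n)%nat /\ x j = -1) -> cos a <= cost P n.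
Proof.
  intros [HP0 HP] [j [Hj Hxj]].
  pose proof sin_a_pos; pose proof cos_a_pos; pose proof (sin_cos_sq a).
  assert (Hw : (- cos a) ^ 2 + sin a ^ 2 <= 1) by lra.
  pose proof (cost_ge_inner P n _ _ Hw) as Hcost. rewrite HP0 in Hcost; cbn [fst snd] in Hcost.
  destruct (HP n (le_n _)) as [_ HF]. specialize (HF j Hj). rewrite Hxj in HF.
  apply Rabs_le_iff in HF. unfold tan in HF.
  assert (Hleft : fst (P n) * cos a + cos a <= snd (P n) * sin a).
  { apply Rmult_le_reg_r with (/ cos a); [apply Rinv_0_lt_compat; lra|].
    replace ((fst (P n) * cos a + cos a) * / cos a) with (fst (P n) + 1) by (field; lra).
    replace (snd (P n) * sin a * / cos a) with (snd (P n) * (sin a / cos a)) by (field; lra).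
    lra. }
  lra.
Qed.

Lemma is_OPT_apex (x : nat -> R) (n : nat) (r : R) :
  (1 <= n)%nat -> x 0%nat = 0 -> (exists j, (j <= n)%nat /\ x j = -1) ->
  (exists j, (j <= n)%nat /\ x j = r) -> (forall j, (j <= n)%nat -> -1 <= x j <= r) ->
  - cos (2 * a) <= r <= 1 -> is_OPT a x n (apex_dist a r).
Proof.
  intros Hn Hx0 Hmin Hmax Hx Hr. split.
  - intros P HP. exact (solution_cost_ge_apex_dist x n r P HP Hmin Hmax Hr).
  - intros m Hm.
    assert (Hsol : solution a x n (jump (apex a r))).
    { split; [reflexivity|]. intros [|i] Hi; [apply in_FC_origin, Hx0|].
      apply apex_in_FC; [intros j Hj; apply Hx; lia|].
      specialize (Hx 0%nat (Nat.le_0_l _)). lra. }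
    specialize (Hm _ Hsol). rewrite cost_jump, dist_origin_apex in Hm by exact Hn. exact Hm.
Qed.

Lemma f1_mul_apex_dist (r : R) :
  f1 a b r * apex_dist a r = (1 + tilt a b * r) / gap_rate a b.
Proof.
  pose proof (apex_quad_pos r) as HQ. pose proof (sqrt_lt_R0 _ HQ).
  pose proof sin_a_pos; pose proof tan_a_pos; pose proof tan_b_nonneg.
  pose proof cos_b_pos.
  unfold f1, apex_dist, tilt, gap_rate. field. repeat split; lra.
Qed.

Lemma apex_dist_neg_cos : apex_dist a (- cos (2 * a)) = cos a.
Proof.
  pose proof sin_a_pos; pose proof cos_a_pos; pose proof (sin_cos_sq a) as Hsc.
  unfold apex_dist.
  replace (1 + (- cos (2 * a)) ^ 2 + 2 * cos (2 * a) * - cos (2 * a))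
    with ((2 * sin a * cos a) * (2 * sin a * cos a)).
  - rewrite sqrt_square by nra. field. lra.
  - rewrite cos_2a. replace 1 with ((sin a ^ 2 + cos a ^ 2) ^ 2) at 1 by (rewrite Hsc; ring).
    ring.
Qed.

Lemma hedge_cost_le_good (x : nat -> R) (n : nat) (P : nat -> pt) (rho : R) :
  good x n -> hedge_run a b x n P -> (forall j, (j <= n)%nat -> x j <= rho) -> rho <= 1 ->
  cost P n <= (1 + tilt a b * rho) / gap_rate a b.
Proof.
  intros Hgood Hrun Hrho Hrho1.
  pose proof tilt_bounds. pose proof gap_rate_pos.
  pose proof (good_nonredundant x n Hgood) as Hnr.
  destruct Hgood as [_ [Hx0 [_ [[_ Hge] _]]]].
  assert (Hrho0 : 0 <= rho) by (rewrite <- Hx0; apply Hrho; lia).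
  assert (Hcost : cost P n * gap_rate a b <= 1 + tilt a b * rho).
  { apply Rle_trans with (Rmax (rho + tilt a b * 1) (1 + tilt a b * rho)).
    - apply (hedge_cost_le x n 1 rho P Hx0 Hnr); [|exact Hrun]. intros j Hj; auto.
    - apply Rmax_lub; nra. }
  apply Rmult_le_reg_r with (gap_rate a b); [assumption|].
  replace ((1 + tilt a b * rho) / gap_rate a b * gap_rate a b)
    with (1 + tilt a b * rho) by (field; lra).
  exact Hcost.
Qed.

Lemma hedge_ratio_le (q : R) :
  hedge_ratios a b q -> exists r, Rmax 0 (- cos (2 * a)) <= r <= 1 /\ q <= f1 a b r.
Proof.
  intros [x [n [P [o [Hgood [Hrun [[_ Hopt] ->]]]]]]].
  destruct (exists_argmax x n) as [jm [Hjm Hxjm]]. set (rho := x jm) in *.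
  pose proof Hgood as [_ [Hx0 [_ [[Hmin _] [_ Hle1]]]]].
  assert (Hrho : 0 <= rho <= 1) by (split; [rewrite <- Hx0; apply Hxjm; lia|apply Hle1, Hjm]).
  pose proof (hedge_cost_le_good x n P rho Hgood Hrun Hxjm (proj2 Hrho)) as Halg.
  pose proof (cost_nonneg P n). pose proof tilt_bounds. pose proof gap_rate_pos.
  pose proof sin_a_pos; pose proof cos_a_pos; pose proof (sin_cos_sq a).
  assert (Hc2 : -1 <= cos (2 * a) <= 1) by (rewrite cos_2a; nra).
  destruct (Rle_dec (- cos (2 * a)) rho) as [Hapex|Hline].
  - exists rho. split; [split; [apply Rmax_lub|]; lra|].
    apply ratio_le with (apex_dist a rho); [lra|apply apex_dist_pos| |].
    + apply Hopt. intros P' HP'.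
      apply (solution_cost_ge_apex_dist x n rho P' HP' Hmin); [exists jm|]; auto; lra.
    + rewrite f1_mul_apex_dist. exact Halg.
  - exists (- cos (2 * a)). split; [split; [apply Rmax_lub|]; lra|].
    apply ratio_le with (cos a); [lra|lra| |].
    + apply Hopt. intros P' HP'. exact (solution_cost_ge_cos x n P' HP' Hmin).
    + rewrite <- apex_dist_neg_cos, f1_mul_apex_dist.
      apply Rle_trans with (1 := Halg).
      apply Rmult_le_compat_r; [left; apply Rinv_0_lt_compat; lra|]. nra.
Qed.

Lemma hedge_len_active (sigma : R) (x : nat -> R) (i : nat) (p : pt) :
  0 <= gap a sigma x i p -> hedge_len a b sigma x i p = gap a sigma x i p / gap_rate a b.
Proof.
  intros Hgap. pose proof gap_rate_pos. unfold hedge_len.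
  apply Rmax_right. unfold Rdiv. apply Rmult_le_pos; [lra|left; apply Rinv_0_lt_compat; lra].
Qed.

Lemma hedge_run_path (x : nat -> R) (n : nat) :
  x 0%nat = 0 -> nonredundant x n -> hedge_run a b x n (hedge_path a b x).
Proof.
  intros Hx0 Hnr.
  assert (Hstep : forall i, (i < n)%nat -> in_FC a x i (hedge_path a b x i) ->
            hedge_step a b x i (hedge_path a b x i) (hedge_path a b x (S i))).
  { intros i Hi Hin. destruct (Hnr i Hi) as [sigma [Hsigma Hadv]].
    assert (Hdir := Hadv 0%nat (Nat.le_0_l _)). rewrite Hx0, Rmult_0_r in Hdir.
    apply (hedge_step_iff sigma); auto.
    cbn [hedge_path]. rewrite (sgn_eq sigma _ Hsigma Hdir). reflexivity. }
  assert (Hin : forall i, (i <= n)%nat -> in_FC a x i (hedge_path a b x i)).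
  { induction i as [|i IH]; intros Hi; [apply in_FC_origin, Hx0|].
    apply (hedge_step_in_FC x i (hedge_path a b x i)).
    apply Hstep; [lia|apply IH; lia]. }
  split; [reflexivity|]. intros i Hi. apply Hstep; [exact Hi|apply Hin; lia].
Qed.

Lemma hedge_cost_probe (r : R) :
  0 < r <= 1 -> cost (hedge_path a b (probe r)) 2 = (1 + tilt a b * r) / gap_rate a b.
Proof.
  intros Hr.
  pose proof gap_rate_pos as HK. pose proof tan_a_pos. pose proof tan_b_nonneg.
  pose proof tan_b_le_tan_a. pose proof cos_b_pos.
  set (K := gap_rate a b) in *.
  set (P1 := ray b 1 (0, 0) (r / K)).
  set (g2 := 1 + r * (tan b - tan a) / (tan a + tan b)).
  assert (Hg2 : 0 <= g2).
  { replace g2 with ((tan a * (1 - r) + tan b * (1 + r)) / (tan a + tan b))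
      by (unfold g2; field; lra).
    apply Rmult_le_pos; [nra|left; apply Rinv_0_lt_compat; lra]. }
  assert (E1 : hedge_path a b (probe r) 1 = P1).
  { cbn [hedge_path probe]. rewrite (sgn_eq 1 r) by lra.
    rewrite hedge_len_active; unfold gap; cbn [fst snd probe]; [|lra].
    unfold P1. f_equal. f_equal. ring. }
  assert (G2 : gap a (-1) (probe r) 1 P1 = g2).
  { unfold gap, P1, ray, g2, K, gap_rate; cbn [fst snd probe]. rewrite sin_b_eq. field. lra. }
  assert (E2 : hedge_path a b (probe r) 2 = ray b (-1) P1 (g2 / K)).
  { change (hedge_path a b (probe r) 2) with
      (ray b (sgn (-1)) (hedge_path a b (probe r) 1)
         (hedge_len a b (sgn (-1)) (probe r) 1 (hedge_path a b (probe r) 1))).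
    rewrite E1, (sgn_eq (-1) (-1)), hedge_len_active, G2 by lra. reflexivity. }
  cbn [cost]. rewrite E2, E1. unfold P1 at 1.
  rewrite !dist_ray; try lra;
    [|unfold Rdiv; apply Rmult_le_pos; [lra|left; apply Rinv_0_lt_compat; lra]..].
  unfold g2, tilt. field. lra.
Qed.

Lemma hedge_ratios_probe (r : R) :
  0 < r <= 1 -> - cos (2 * a) <= r -> hedge_ratios a b (f1 a b r).
Proof.
  intros Hr Hrc. pose proof (apex_dist_pos r). pose proof gap_rate_pos.
  pose proof (good_probe r Hr) as Hgood.
  exists (probe r), 2%nat, (hedge_path a b (probe r)), (apex_dist a r).
  split; [exact Hgood|]. split; [|split].
  - apply hedge_run_path; [reflexivity|apply good_nonredundant, Hgood].
  - apply is_OPT_apex; [lia|reflexivity| | |intros [|[|j]] _; simpl; lra|lra].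
    + exists 2%nat. split; [lia|reflexivity].
    + exists 1%nat. split; [lia|reflexivity].
  - apply Rmult_eq_reg_r with (apex_dist a r); [|lra].
    rewrite f1_mul_apex_dist, hedge_cost_probe by exact Hr. field. lra.
Qed.

Lemma f1_continuous : continuity (f1 a b).
Proof.
  unfold f1. reg.
  - left; apply apex_quad_pos.
  - intros r. apply Rgt_not_eq, sqrt_lt_R0, apex_quad_pos.
Qed.

End Hedge.

Theorem lemma5 (a b : R) (ha : 0 < a < PI / 2) (hb : 0 <= b <= a) :
  exists M : R,
    (exists r, Rmax 0 (- cos (2 * a)) <= r <= 1 /\ M = f1 a b r) /\
    (forall r, Rmax 0 (- cos (2 * a)) <= r <= 1 -> f1 a b r <= M) /\
    is_lub (hedge_ratios a b) M.
Proof.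
  set (r0 := Rmax 0 (- cos (2 * a))).
  assert (Hr0 : 0 <= r0 <= 1).
  { pose proof (COS_bound (2 * a)). split; [apply Rmax_l|apply Rmax_lub; lra]. }
  assert (Hcont : forall r, r0 <= r <= 1 -> continuity_pt (f1 a b) r)
    by (intros r _; apply f1_continuous; assumption).
  destruct (continuity_ab_maj (f1 a b) r0 1 (proj2 Hr0) Hcont) as [rm [Hmax Hrm]].
  exists (f1 a b rm). split; [exists rm; auto|]. split; [exact Hmax|]. split.
  - intros q Hq. destruct (hedge_ratio_le a b ha hb q Hq) as [r [Hr Hqr]].
    specialize (Hmax r Hr). lra.
  - intros m Hm. apply (le_of_approx_le (f1 a b) r0 1 rm m Hcont Hrm).
    intros d Hd. set (r := Rmin 1 (rm + d / 2)).
    assert (Hr : rm <= r <= rm + d / 2)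
      by (split; [apply Rmin_glb; lra|apply Rmin_r]).
    assert (Hr1 : 0 < r <= 1) by (split; [apply Rmin_glb_lt; lra|apply Rmin_l]).
    exists r. split; [lra|]. split; [apply Rabs_def1; lra|].
    apply Hm, hedge_ratios_probe; try assumption.
    apply Rle_trans with r0; [apply Rmax_r|lra].
Qed.
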